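(* Let $P\subseteq\mathbb{C}$ be a finitely generated field extension of $\mathbb{Q}$, $C=P\cap\mu$, $a\in P^\times$ and $k>1$ an integer. The following are equivalent: (i) $a$ is $k$-simple in $P$; (ii) for every divisor $m>1$ of $k$ there are no $\alpha\in P$ and root of unity $\epsilon$ with $a=\alpha^m\epsilon$; (iii) for every divisor $m>1$ of $k$, the image of $a$ in the quotient group $P^{\times}/C$ has no $m$-th root in $P^\times/C$.
   Context: $\mu$ is the group of all roots of unity in $\mathbb{C}^\times$. For an integer $k>1$, a nonzero $a\in P$ is $k$-simple (in $P$) if $a\notin\mu$ and for all $b\in P$, $\epsilon\in\mu$ and integers $d$, $a^d=b^k\epsilon$ implies $k\mid d$. *)

From mathcomp Require Import all_boot all_algebra.
From mathcomp Require Import complex Rstruct.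
Set Implicit Arguments. Unset Strict Implicit. Unset Printing Implicit Defensive.
Import GRing.Theory Num.Theory.
Local Open Scope ring_scope.

Definition Cc : numClosedFieldType := complex Rdefinitions.R.

Definition in_mu (x : Cc) : Prop := exists n : nat, (0 < n)%N /\ x ^+ n = 1.

Definition is_subfield (P : pred Cc) : Prop :=
  [/\ 0 \in P, 1 \in P,
      forall x y, x \in P -> y \in P -> x - y \in P,
      forall x y, x \in P -> y \in P -> x * y \in P &
      forall x, x \in P -> x^-1 \in P].

(** [P] is a finitely generated field extension of Q, i.e. the smallest subfield
    of C containing some finite list [s] (every subfield of C contains Q). *)
Definition fin_gen_field (P : pred Cc) : Prop :=
  exists s : seq Cc, is_subfield P /\ all (fun x => x \in P) s /\
    forall Q : pred Cc, is_subfield Q -> all (fun x => x \in Q) s ->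
      forall x, x \in P -> x \in Q.

Definition k_simple (P : pred Cc) (k : nat) (a : Cc) : Prop :=
  [/\ a \in P, a != 0, ~ in_mu a &
      forall (b eps : Cc) (d : int), b \in P -> in_mu eps ->
        a ^ d = b ^+ k * eps -> (k%:Z %| d)%Z].

(** Equality in the quotient group P^x / C, C = P ∩ mu, of the classes of
    x, y ∈ P^x:  x / y ∈ C. *)
Definition eq_mod_C (P : pred Cc) (x y : Cc) : Prop :=
  x / y \in P /\ in_mu (x / y).

From mathcomp Require Import all_boot all_algebra.
From mathcomp Require Import complex Rstruct.

Set Implicit Arguments.
Unset Strict Implicit.
Unset Printing Implicit Defensive.
Import GRing.Theory Num.Theory.
Local Open Scope ring_scope.

(* Then c = b^u a^v
   satisfies c^k = a^g / eps^u, so with m = k/g the quotient a / c^m has g-th power eps^u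
   and is itself a root of unity; (ii) forces m = 1, i.e. k | d. *)

Lemma in_mu_neq0 (x : Cc) : in_mu x -> x != 0.
Proof.
case=> -[|n] [// _]; apply: contra_eqN => /eqP ->.
by rewrite expr0n eq_sym oner_eq0.
Qed.

Lemma in_muV (x : Cc) : in_mu x -> in_mu x^-1.
Proof. by case=> n [n0 xn]; exists n; rewrite exprVn xn invr1. Qed.

Lemma in_muX (x : Cc) (p : nat) : in_mu x -> in_mu (x ^+ p).
Proof. by case=> n [n0 xn]; exists n; rewrite -exprM mulnC exprM xn expr1n. Qed.

Lemma in_muXz (x : Cc) (z : int) : in_mu x -> in_mu (x ^ z).
Proof.
move=> mux; case: z => n; first by rewrite -exprnP; apply: in_muX.
by rewrite NegzE -exprnN; apply/in_muV/in_muX.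
Qed.

Lemma in_mu_expnK (x : Cc) (g : nat) : (0 < g)%N -> in_mu (x ^+ g) -> in_mu x.
Proof.
move=> g0 [n [n0 xgn]]; exists (g * n)%N; split; first by rewrite muln_gt0 g0.
by rewrite exprM.
Qed.

Definition is_power_mod_mu (P : pred Cc) (m : nat) (a : Cc) : Prop :=
  exists alpha eps : Cc, [/\ alpha \in P, in_mu eps & a = alpha ^+ m * eps].

Section Subfield.
Variable P : pred Cc.
Hypothesis subP : is_subfield P.

Lemma subfield1 : 1 \in P. Proof. by case: subP. Qed.

Lemma subfieldM x y : x \in P -> y \in P -> x * y \in P.
Proof. by case: subP => _ _ _ + _; apply. Qed.

Lemma subfieldV x : x \in P -> x^-1 \in P.
Proof. by case: subP => _ _ _ _; apply. Qed.

Lemma subfieldX x n : x \in P -> x ^+ n \in P.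
Proof.
by move=> Px; elim: n => [|n IHn]; rewrite ?expr0 ?subfield1 // exprS subfieldM.
Qed.

Lemma subfieldXz x (z : int) : x \in P -> x ^ z \in P.
Proof.
move=> Px; case: z => n; first by rewrite -exprnP subfieldX.
by rewrite NegzE -exprnN subfieldV // subfieldX.
Qed.

Lemma is_power_mod_muP (m : nat) (a : Cc) : a \in P -> a != 0 -> (0 < m)%N ->
  is_power_mod_mu P m a <->
  exists beta : Cc, [/\ beta \in P, beta != 0 & eq_mod_C P (beta ^+ m) a].
Proof.
move=> Pa a0 m0; split.
  case=> alpha [eps [Palpha mu_eps def_a]].
  have alpha0 : alpha != 0.
    by apply: contraNneq a0 => alpha0; rewrite def_a alpha0 expr0n gtn_eqF ?mul0r.
  have alpham0 : alpha ^+ m != 0 by rewrite expf_neq0.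
  exists alpha; split; rewrite // /eq_mod_C.
  have -> : alpha ^+ m / a = eps^-1 by rewrite def_a invfM mulrA divff ?mul1r.
  split; last exact: in_muV.
  have -> : eps = a / alpha ^+ m by rewrite def_a mulrAC divff ?mul1r.
  by apply/subfieldV/subfieldM => //; apply/subfieldV/subfieldX.
case=> beta [Pbeta beta0 [_ mu_q]]; exists beta, (beta ^+ m / a)^-1.
split; [by [] | exact: in_muV | ].
by rewrite invf_div mulrC divfK // expf_neq0.
Qed.

Lemma is_power_mod_mu_gcd (a b eps : Cc) (d : int) (k : nat) :
  a \in P -> a != 0 -> b \in P -> in_mu eps -> (0 < k)%N ->
  a ^ d = b ^+ k * eps -> is_power_mod_mu P (k %/ gcdn `|d|%N k) a.
Proof.
move=> Pa a0 Pb mu_eps k0 def_ad.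
have b0 : b != 0.
  apply: contraTneq (expfz_neq0 d a0) => b0.
  by rewrite negbK def_ad b0 expr0n gtn_eqF ?mul0r.
set g := gcdn _ _; set m := (k %/ g)%N.
have g0 : (0 < g)%N by rewrite gcdn_gt0 k0 orbT.
have def_k : k = (m * g)%N by rewrite divnK // dvdn_gcdr.
have [u [v def_g]] := Bezoutz d k.
set c := b ^ u * a ^ v.
have c0 : c != 0 by rewrite mulf_neq0 // expfz_neq0.
have ck : c ^+ k = a ^+ g / eps ^ u.
  have -> : a ^+ g = a ^ (u * d + v * k) by rewrite def_g.
  rewrite expfzDr // (mulrC u) -(exprz_exp a d u) def_ad expfzMl.
  rewrite exprMn !exprnP !exprz_exp.
  by rewrite mulrAC mulfK ?expfz_neq0 ?in_mu_neq0 // !(mulrC (Posz k)).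
exists c, (a / c ^+ m); split.
- by rewrite subfieldM // subfieldXz.
- apply: (@in_mu_expnK _ g g0); rewrite expr_div_n -exprM -def_k ck invf_div mulrC.
  by rewrite divfK ?expf_neq0 //; apply: in_muXz.
- by rewrite mulrC divfK // expf_neq0.
Qed.

Lemma not_power_k_simple (k : nat) (a : Cc) :
  a \in P -> a != 0 -> (1 < k)%N ->
  (forall m : nat, (1 < m)%N -> (m %| k)%N -> ~ is_power_mod_mu P m a) ->
  k_simple P k a.
Proof.
move=> Pa a0 k1 not_power; have k0 := ltnW k1.
split=> // [mu_a | b eps d Pb mu_eps def_ad].
  by apply: (not_power k k1 (dvdnn k)); exists 1, a; rewrite expr1n mul1r subfield1.
have := is_power_mod_mu_gcd Pa a0 Pb mu_eps k0 def_ad.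
set g := gcdn _ _ => power_a; have gk : (g %| k)%N by apply: dvdn_gcdr.
have [m1 | m_le1] := ltnP 1 (k %/ g); first by case: (not_power _ m1 (dvdn_div gk)).
have g0 : (0 < g)%N by rewrite gcdn_gt0 k0 orbT.
have m0 : (0 < k %/ g)%N by rewrite divn_gt0 // dvdn_leq.
have m_eq1 : (k %/ g = 1)%N by apply/eqP; rewrite eqn_leq m_le1.
by rewrite dvdzE -(divnK gk) m_eq1 mul1n dvdn_gcdl.
Qed.

End Subfield.

Lemma k_simple_not_power (P : pred Cc) (k : nat) (a : Cc) :
  (0 < k)%N -> k_simple P k a ->
  forall m : nat, (1 < m)%N -> (m %| k)%N -> ~ is_power_mod_mu P m a.
Proof.
move=> k0 [_ _ _ k_simple_a] m m1 mk [alpha [eps [Palpha mu_eps def_a]]].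
have /k_simple_a : a ^ Posz (k %/ m) = alpha ^+ k * eps ^+ (k %/ m).
  by rewrite -exprnP def_a exprMn -exprM mulnC divnK.
move=> /(_ Palpha (@in_muX eps (k %/ m)%N mu_eps)); rewrite dvdzE /= => k_dvd.
have km0 : (0 < k %/ m)%N by rewrite divn_gt0 ?(ltnW m1) // dvdn_leq.
have : (k %/ m < k)%N by rewrite ltn_Pdiv // ltnW.
by rewrite ltnNge dvdn_leq.
Qed.

Theorem lemma2p8 (P : pred Cc) (a : Cc) (k : nat) :
  fin_gen_field P -> a \in P -> a != 0 -> (1 < k)%N ->
  (k_simple P k a <->
     (forall m : nat, (1 < m)%N -> (m %| k)%N ->
        ~ exists alpha eps : Cc,
            [/\ alpha \in P, in_mu eps & a = alpha ^+ m * eps])) /\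
  ((forall m : nat, (1 < m)%N -> (m %| k)%N ->
        ~ exists alpha eps : Cc,
            [/\ alpha \in P, in_mu eps & a = alpha ^+ m * eps]) <->
     (forall m : nat, (1 < m)%N -> (m %| k)%N ->
        ~ exists beta : Cc,
            [/\ beta \in P, beta != 0 & eq_mod_C P (beta ^+ m) a])).
Proof.
move=> [_ [subP _]] Pa a0 k1; split.
  by split; [exact: k_simple_not_power (ltnW k1) | exact: not_power_k_simple].
split=> not_power m m1 mk.
  by have [_ of_C] := is_power_mod_muP subP Pa a0 (ltnW m1) => /of_C; apply: not_power.
by have [to_C _] := is_power_mod_muP subP Pa a0 (ltnW m1) => /to_C; apply: not_power.
Qed.
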